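(* Let $P$ be a finite poset, let $D$ be a comparability digraph for $P$, let $\mu$ be a probability distribution on the chains of $P$ and let $\mathcal{C}_\mu$ be a random chain chosen according to $\mu$. Suppose that $\mathbb{P}(x\in \mathcal{C}_\mu)>0$ for every $x\in P$. Then for every set $S\subseteq P$, \[\mathrm{comp}(S)\geq \left({\max_{(x,y)\in E(D)}\mathbb{P}\left(y\in \mathcal{C}_\mu\mid x\in\mathcal{C}_\mu\right)}\right)^{-1}\left(|S| - \left({\min_{x\in P}\mathbb{P}\left(x\in\mathcal{C}_\mu\right)}\right)^{-1}\right).\]
   Context: A chain in a poset is a set of pairwise comparable elements. A comparability digraph for a poset $P$ is a directed graph $D$ with vertex set $P$ such that every arc $(x,y)\in E(D)$ joins comparable elements $x,y$, and for every pair of distinct comparable elements $x,y\in P$ exactly one of the arcs $(x,y)$, $(y,x)$ lies in $E(D)$ (the direction of an arc need not agree with the order). For $S\subseteq P$, $\mathrm{comp}(S)$ is the number of unordered pairs of distinct comparable elements of $S$. *)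

From HB Require Import structures.
From mathcomp Require Import all_boot all_order all_algebra.
Set Implicit Arguments. Unset Strict Implicit. Unset Printing Implicit Defensive.
Import Order.TTheory GRing.Theory Num.Theory.
Local Open Scope order_scope.

Definition is_chain (d : Order.disp_t) (T : finPOrderType d) (C : {set T}) : bool :=
  [forall x in C, forall y in C, x >=< y].

(* comp(S): number of unordered pairs {x,y} of distinct comparable elements of S,
   i.e. number of 2-element subsets of S whose elements are comparable. *)
Definition ncomp (d : Order.disp_t) (T : finPOrderType d) (S : {set T}) : nat :=
  #|[set A : {set T} | (A \subset S) && (#|A| == 2)
                        && [forall x in A, forall y in A, x >=< y]]|.

Definition comparability_digraph (d : Order.disp_t) (T : finPOrderType d)
  (D : rel T) : Prop :=
  (forall x y, D x y -> (x != y) && (x >=< y)) /\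
  (forall x y, x != y -> x >=< y -> D x y != D y x).

Local Open Scope ring_scope.

Definition chain_distribution (d : Order.disp_t) (T : finPOrderType d)
  (R : realFieldType) (mu : {set T} -> R) : Prop :=
  (forall C, 0 <= mu C) /\ (forall C, mu C != 0 -> is_chain C) /\
  (\sum_(C : {set T}) mu C = 1).

Definition prob_in (d : Order.disp_t) (T : finPOrderType d) (R : realFieldType)
  (mu : {set T} -> R) (x : T) : R :=
  \sum_(C : {set T} | x \in C) mu C.

Definition prob_cond (d : Order.disp_t) (T : finPOrderType d) (R : realFieldType)
  (mu : {set T} -> R) (x y : T) : R :=
  (\sum_(C : {set T} | (x \in C) && (y \in C)) mu C) / prob_in mu x.

(* max over arcs of D of the conditional probabilities (0 if D has no arcs;
   all values are nonnegative so this is the maximum when arcs exist). *)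
Definition max_cond (d : Order.disp_t) (T : finPOrderType d) (R : realFieldType)
  (mu : {set T} -> R) (D : rel T) : R :=
  \big[Num.max/0]_(p : T * T | D p.1 p.2) prob_cond mu p.1 p.2.

(* min over x in P of P(x in C_mu) (1 if P is empty; all values are <= 1). *)
Definition min_prob (d : Order.disp_t) (T : finPOrderType d) (R : realFieldType)
  (mu : {set T} -> R) : R :=
  \big[Num.min/1]_(x : T) prob_in mu x.

From HB Require Import structures.
From mathcomp Require Import all_boot all_order all_algebra.
Import Order.TTheory GRing.Theory Num.Theory.
Set Implicit Arguments.
Unset Strict Implicit.
Unset Printing Implicit Defensive.
Local Open Scope ring_scope.

(* Weight each x by 1 / P(x in C), so that the expected weight of S :&: C is |S|.
   On a chain C the arcs of D make S :&: C a semicomplete digraph, in which at most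
   one vertex has no out-arc; charging every other vertex x to one of its out-arcs
   (x, y) bounds the weight of S :&: C by 1 / min_x P(x in C) plus the total weight
   of the tails of the arcs inside S :&: C.  In expectation the arc (x, y)
   contributes exactly P(y in C | x in C), and S spans at most comp(S) arcs. *)

Section SemiComplete.

Variables (T : finType) (D : rel T) (X : {set T}).
Hypothesis D_semicomplete : {in X &, forall x y, x != y -> D x y || D y x}.

Definition has_out_arc (x : T) : bool := [exists y in X, D x y].

Lemma no_out_arc_unique :
  {in X &, forall x y, ~~ has_out_arc x -> ~~ has_out_arc y -> x = y}.
Proof.
move=> x y xX yX /existsPn nx /existsPn ny; apply/eqP/negP => /negP neq_xy.
have /orP[Dxy | Dyx] := D_semicomplete xX yX neq_xy.
  by have := nx y; rewrite yX Dxy.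
by have := ny x; rewrite xX Dyx.
Qed.

Variables (R : numDomainType) (f : T -> R) (B : R).
Hypotheses (f_ge0 : {in X, forall x, 0 <= f x}) (f_le : {in X, forall x, f x <= B}).
Hypothesis B_ge0 : 0 <= B.

Lemma sum_no_out_arc_le : \sum_(x in X | ~~ has_out_arc x) f x <= B.
Proof.
case: (pickP [pred x in X | ~~ has_out_arc x]) => [x0 /andP[x0X nx0] | none].
  rewrite (big_pred1 x0) ?f_le // => x /=.
  apply/andP/eqP => [[xX nx] | ->]; last by [].
  exact: no_out_arc_unique.
by rewrite big_pred0.
Qed.

Lemma sum_le_add_out_arcs :
  \sum_(x in X) f x <= B + \sum_(x in X) \sum_(y in X | D x y) f x.
Proof.
rewrite (bigID has_out_arc) /= addrC lerD ?sum_no_out_arc_le //.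
rewrite [leRHS](bigID has_out_arc) /= -[leLHS]addr0 lerD //; last first.
  by rewrite sumr_ge0 // => x /andP[xX _]; rewrite sumr_ge0 // => *; apply: f_ge0.
apply: ler_sum => x /andP[xX /existsP[y /andP[yX Dxy]]].
rewrite (bigD1 y) ?yX //= lerDl sumr_ge0 // => *; exact: f_ge0.
Qed.

End SemiComplete.

Section Digraph.

Variables (d : Order.disp_t) (T : finPOrderType d) (D : rel T).
Hypothesis hD : comparability_digraph D.

Lemma comparability_digraph_chain C :
  is_chain C -> {in C &, forall x y, x != y -> D x y || D y x}.
Proof.
move=> /forallP chainC x y xC yC neq_xy.
have /implyP/(_ xC)/forallP/(_ y)/implyP/(_ yC) cmp_xy := chainC x.
by move: (hD.2 x y neq_xy cmp_xy); case: (D x y); case: (D y x).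
Qed.

Definition arcs_in (S : {set T}) : {set T * T} :=
  [set q | [&& q.1 \in S, q.2 \in S & D q.1 q.2]].

Lemma card_arcs_le_ncomp S : (#|arcs_in S| <= ncomp S)%N.
Proof.
have endpoints_inj : {in arcs_in S &, injective (fun q : T * T => [set q.1; q.2])}.
  move=> [a b] [c e]; rewrite !inE /= => /and3P[_ _ Dab] /and3P[_ _ Dce] eq_ab_ce.
  have /andP[neq_ab cmp_ab] := hD.1 _ _ Dab.
  have ac_e : a \in [set c; e] by rewrite -eq_ab_ce set21.
  have bc_e : b \in [set c; e] by rewrite -eq_ab_ce set22.
  move: neq_ab cmp_ab Dab; case/set2P: ac_e bc_e => -> /set2P[] -> //; rewrite ?eqxx //.
  by move=> neq_ec cmp_ec Dec; move: (hD.2 _ _ neq_ec cmp_ec); rewrite Dec Dce.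
rewrite /ncomp -(card_in_imset endpoints_inj); apply/subset_leq_card/subsetP.
move=> _ /imsetP[[a b] + ->]; rewrite !inE /= => /and3P[aS bS Dab].
have /andP[neq_ab cmp_ab] := hD.1 _ _ Dab.
rewrite subUset !sub1set aS bS cards2 neq_ab /=.
apply/forallP => u; apply/implyP => /set2P[]->; apply/forallP => v;
  by apply/implyP => /set2P[]->; rewrite ?comparablexx // comparable_sym.
Qed.

End Digraph.

Section ChainWeights.

Variables (d : Order.disp_t) (T : finPOrderType d) (R : realFieldType).
Variables (mu : {set T} -> R) (S : {set T}).

Lemma sum_mu_inv_prob_in :
  (forall x, prob_in mu x != 0) ->
  \sum_C mu C * \sum_(x in S :&: C) (prob_in mu x)^-1 = #|S|%:R.
Proof.
move=> prob_in_neq0.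
under eq_bigr do rewrite mulr_sumr.
rewrite (exchange_big_dep (mem S)) => [|C x _ /setIP[]//] /=.
rewrite -sumr_const; apply: eq_bigr => x xS.
rewrite -(mulfV (prob_in_neq0 x)) /prob_in mulr_suml.
by apply: eq_bigl => C; rewrite inE xS.
Qed.

Lemma sum_mu_inv_prob_in_arcs (D : rel T) :
  \sum_C mu C * \sum_(x in S :&: C) \sum_(y in S :&: C | D x y) (prob_in mu x)^-1
  = \sum_(x in S) \sum_(y in S | D x y) prob_cond mu x y.
Proof.
under eq_bigr do rewrite mulr_sumr.
rewrite (exchange_big_dep (mem S)) => [|C x _ /setIP[]//] /=.
apply: eq_bigr => x xS; under eq_bigr do rewrite mulr_sumr.
rewrite (exchange_big_dep (fun y => (y \in S) && D x y)) => [|C y _ /andP[/setIP[-> _] ->]] //=.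
apply: eq_bigr => y /andP[yS Dxy]; rewrite /prob_cond mulr_suml.
by apply: eq_bigl => C; rewrite !inE xS yS Dxy andbT.
Qed.

End ChainWeights.

Section Extrema.

Variables (d : Order.disp_t) (T : finPOrderType d) (R : realFieldType).
Variables (mu : {set T} -> R) (D : rel T).

Lemma min_prob_gt0 : (forall x, 0 < prob_in mu x) -> 0 < min_prob mu.
Proof. by move=> hpos; apply/bigmin_gtP. Qed.

Lemma min_prob_le x : min_prob mu <= prob_in mu x.
Proof. exact: bigmin_le. Qed.

Lemma max_cond_ge0 : 0 <= max_cond mu D.
Proof. exact: bigmax_ge_id. Qed.

Lemma prob_cond_le_max_cond x y : D x y -> prob_cond mu x y <= max_cond mu D.
Proof. exact: (@le_bigmax_cond _ R _ _ (x, y)). Qed.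

End Extrema.

Section Bounds.

Variables (d : Order.disp_t) (T : finPOrderType d) (R : realFieldType).
Variables (D : rel T) (mu : {set T} -> R).
Hypothesis hD : comparability_digraph D.

Lemma card_le_inv_min_prob_add_cond (S : {set T}) :
  chain_distribution mu -> (forall x, 0 < prob_in mu x) ->
  #|S|%:R <= (min_prob mu)^-1 + \sum_(x in S) \sum_(y in S | D x y) prob_cond mu x y.
Proof.
case=> mu_ge0 [mu_chain mu_sum1] hpos.
have inv_prob_le x : (prob_in mu x)^-1 <= (min_prob mu)^-1.
  by rewrite lef_pV2 ?posrE ?min_prob_gt0 ?min_prob_le.
rewrite -(sum_mu_inv_prob_in (mu := mu) S) => [|x]; last by rewrite lt0r_neq0.
rewrite -(sum_mu_inv_prob_in_arcs mu) -[_^-1]mul1r -mu_sum1 mulr_suml -big_split /=.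
apply: ler_sum => C _; rewrite -mulrDr.
have [->|/mu_chain chainC] := eqVneq (mu C) 0; first by rewrite !mul0r.
rewrite ler_wpM2l //; apply: sum_le_add_out_arcs.
- move=> x y /setIP[_ xC] /setIP[_ yC]; exact: (comparability_digraph_chain hD chainC xC yC).
- by move=> x _; rewrite invr_ge0 ltW.
- by move=> x _; apply: inv_prob_le.
- by rewrite invr_ge0 ltW ?min_prob_gt0.
Qed.

Lemma sum_cond_arcs_le (S : {set T}) :
  \sum_(x in S) \sum_(y in S | D x y) prob_cond mu x y <= max_cond mu D * (ncomp S)%:R.
Proof.
rewrite pair_big_dep (eq_bigl (fun q => q \in arcs_in D S)) => [|q]; last by rewrite inE.
apply: le_trans (_ : \sum_(q in arcs_in D S) max_cond mu D <= _).
  by apply: ler_sum => -[x y]; rewrite inE => /and3P[_ _ Dxy]; apply: prob_cond_le_max_cond.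
rewrite sumr_const -[leLHS]mulr_natr; apply: ler_wpM2l; first exact: max_cond_ge0.
by rewrite ler_nat card_arcs_le_ncomp.
Qed.

End Bounds.

Theorem mainTheorem7 (d : Order.disp_t) (T : finPOrderType d) (R : realFieldType)
  (D : rel T) (mu : {set T} -> R)
  (hD : comparability_digraph D) (hmu : chain_distribution mu)
  (hpos : forall x : T, 0 < prob_in mu x) (S : {set T}) :
  (max_cond mu D)^-1 * ( (#|S|%:R : R) - (min_prob mu)^-1) <= (ncomp S)%:R.
Proof.
have [->|M_neq0] := eqVneq (max_cond mu D) 0; first by rewrite invr0 mul0r.
have M_gt0 : 0 < max_cond mu D by rewrite lt_def M_neq0 max_cond_ge0.
rewrite ler_pdivrMl // lerBlDl.
apply: le_trans (card_le_inv_min_prob_add_cond hD S hmu hpos) _.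
by rewrite lerD2l sum_cond_arcs_le.
Qed.
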